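(* Let $p$ be a prime and $G=\Gamma(Tr(\mathbb{Z}_{p^2}))$. Then $$|E(G)|=\tfrac12\,p^2(p^2-1)\left(p^6+p^5-p^4-2p^2-1\right).$$
   Context: For a ring $S$ with identity whose center $Z(S)$ is not all of $S$, the commuting graph $\Gamma(S)$ is the simple graph with vertex set $S\setminus Z(S)$, in which two distinct vertices $a,b$ are adjacent iff $ab=ba$; $E(G)$ is the edge set. $Tr(R)$ denotes the ring of all $2\times 2$ upper triangular matrices over $R$. *)

From HB Require Import structures.
From mathcomp Require Import all_boot all_order all_algebra.
Set Implicit Arguments. Unset Strict Implicit. Unset Printing Implicit Defensive.
Import GRing.Theory.
Local Open Scope ring_scope.

(* R := Z_{n} realized as 'Z_n (n >= 2 in all uses). *)

(* Tr(R): the ring of 2x2 upper triangular matrices over R, realized as the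
   set of 2x2 matrices whose (1,0) entry (lower-left) is zero; the ring
   operations are those of 'M[R]_2 (Tr(R) is a subring). *)

Section Commuting.
Variable R : finNzRingType.

Definition upperTr : {set 'M[R]_2} :=
  [set A : 'M[R]_2 | A ord_max ord0 == 0].

Definition centerTr : {set 'M[R]_2} :=
  [set A in upperTr | [forall B in upperTr, A *m B == B *m A]].

Definition commVertices : {set 'M[R]_2} := upperTr :\: centerTr.

Definition commEdges : {set {set 'M[R]_2}} :=
  [set E : {set 'M[R]_2} |
     [exists A in commVertices, exists B in commVertices,
        [&& A != B, A *m B == B *m A & E == [set A; B]]]].
End Commuting.

From mathcomp Require Import all_boot all_order all_algebra.
From mathcomp Require Import ring.
Set Implicit Arguments. Unset Strict Implicit. Unset Printing Implicit Defensive.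
Import GRing.Theory.

(* Write an upper triangular matrix as d + [[x, y], [0, 0]]. Two such matrices
   commute iff (x, y) and (x', y') are parallel, i.e. x y' = y x', and the
   central ones are those with (x, y) = 0. Counting ordered pairs of commuting
   vertices, twice the number of edges plus the number of vertices is |R|^2
   times the sum, over nonzero u, of the number of nonzero v parallel to u.
   In Z/p^2 the nonunits form the ideal pR = ann(p), of size p, so the vectors
   parallel to u are |R| many when u has a unit coordinate and |R| p many
   otherwise; counting both kinds of u gives the formula. *)

Section SimpleGraph.
Variables (T : finType) (V : {set T}) (r : rel T).

Definition graphEdges : {set {set T}} :=
  [set E : {set T} | [exists A in V, exists B in V,
                       [&& A != B, r A B & E == [set A; B]]]].

Definition arcs : {set T * T} :=
  [set t | [&& t.1 \in V, t.2 \in V, t.1 != t.2 & r t.1 t.2]].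

Hypothesis r_sym : symmetric r.

Lemma card_arcs : #|arcs| = (#|graphEdges| * 2)%N.
Proof.
rewrite -sum1_card (partition_big (fun t => [set t.1; t.2]) (mem graphEdges)) /=.
  rewrite -sum_nat_const; apply: eq_bigr => E.
  rewrite inE => /exists_inP[A VA /exists_inP[B VB]].
  case/and3P=> nAB rAB /eqP->.
  have <-: #|[set (A, B); (B, A)]| = 2.
    by rewrite cards2 xpair_eqE (negbTE nAB).
  rewrite -sum1_card; apply: eq_bigl => -[X Y] /=; rewrite !inE /=.
  apply/andP/orP => [[/and4P[VX VY nXY _] /eqP eXY]|].
    have XAB : X \in [set A; B] by rewrite -eXY set21.
    have YAB : Y \in [set A; B] by rewrite -eXY set22.
    apply/orP; rewrite !xpair_eqE; move: XAB YAB nXY.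
    by rewrite !inE => /orP[]/eqP-> /orP[]/eqP->; rewrite !eqxx ?orbT.
  case=> /eqP[-> ->]; rewrite VA VB /=.
    by rewrite nAB rAB.
  by rewrite eq_sym nAB r_sym rAB setUC.
move=> [A B]; rewrite inE => /and4P[VA VB nAB rAB]; rewrite inE.
by apply/exists_inP; exists A => //; apply/exists_inP; exists B; rewrite // nAB rAB eqxx.
Qed.

Lemma sum_card_adj : {in V, reflexive r} ->
  \sum_(A in V) #|[set B in V | r A B]| = (#|graphEdges| * 2 + #|V|)%N.
Proof.
move=> r_refl; rewrite -card_arcs -!sum1_card.
have ->: \sum_(t in arcs) 1 = \sum_(A in V) \sum_(B | [&& B \in V, A != B & r A B]) 1.
  by rewrite pair_big_dep; apply: eq_bigl => t; rewrite inE.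
rewrite -big_split /=.
apply: eq_bigr => A VA; rewrite (cardsD1 A) !inE VA r_refl // addnC -sum1_card.
by congr (_ + 1)%N; apply: eq_bigl => B; rewrite !inE andbCA eq_sym.
Qed.
End SimpleGraph.

Local Open Scope ring_scope.

Section UpperTriangular.
Variable R : finComNzRingType.

Definition upmx (d : R) (u : R * R) : 'M[R]_2 :=
  \matrix_(i, j) if i == ord0 then (if j == ord0 then d + u.1 else u.2)
                 else (if j == ord0 then 0 else d).

Definition parallel (u v : R * R) : bool := u.1 * v.2 == u.2 * v.1.

Lemma ord2P (i : 'I_2) : i = ord0 \/ i = ord_max.
Proof. by case: i => [[|[|//]] Hi]; [left|right]; apply: val_inj. Qed.

Lemma mulmx2E (A B : 'M[R]_2) i j :
  (A *m B) i j = A i ord0 * B ord0 j + A i ord_max * B ord_max j.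
Proof.
rewrite mxE !big_ord_recl big_ord0 addr0.
by congr (_ + A i _ * B _ j); apply: val_inj.
Qed.

Lemma upmx_upperTr d u : upmx d u \in upperTr R.
Proof. by rewrite inE mxE. Qed.

Lemma upmx_inj : injective (fun t : R * (R * R) => upmx t.1 t.2).
Proof.
move=> [d [x y]] [d' [x' y']] /= /matrixP eq_mx.
have := eq_mx ord0 ord0; have := eq_mx ord0 ord_max; have := eq_mx ord_max ord_max.
by rewrite !mxE /= => -> -> /addrI ->.
Qed.

Lemma upperTrE : upperTr R = [set upmx t.1 t.2 | t : R * (R * R)].
Proof.
apply/setP => A; apply/idP/imsetP => [|[t _ ->]]; last exact: upmx_upperTr.
rewrite inE => /eqP A10.
exists (A ord_max ord_max, (A ord0 ord0 - A ord_max ord_max, A ord0 ord_max)) => //.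
apply/matrixP => i j; rewrite mxE /=.
by case: (ord2P i) => ->; case: (ord2P j) => -> //=; rewrite addrC subrK.
Qed.

Lemma upmx_comm d u d' v :
  (upmx d u *m upmx d' v == upmx d' v *m upmx d u) = parallel u v.
Proof.
have cross : (d + u.1) * v.2 + u.2 * d' - ((d' + v.1) * u.2 + v.2 * d)
             = u.1 * v.2 - u.2 * v.1 by ring.
apply/eqP/eqP => [/matrixP/(_ ord0 ord_max)/eqP|uv].
  by rewrite !mulmx2E !mxE /= -subr_eq0 cross subr_eq0 => /eqP.
apply/matrixP => i j; rewrite !mulmx2E !mxE.
case: (ord2P i) => ->; case: (ord2P j) => -> /=; rewrite ?mxE /=; try ring.
by apply/eqP; rewrite -subr_eq0 cross uv subrr.
Qed.

Lemma parallel0 u : parallel u 0.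
Proof. by rewrite /parallel /= !mulr0. Qed.

Lemma upmx_center d u : (upmx d u \in centerTr R) = (u == 0).
Proof.
rewrite inE upmx_upperTr /=; apply/forall_inP/eqP => [u_central|->].
  have := u_central _ (upmx_upperTr 0 (0, 1)).
  have := u_central _ (upmx_upperTr 0 (1, 0)).
  rewrite !upmx_comm /parallel /= !mulr1 !mulr0 => /eqP u2 /eqP u1.
  by case: u {u_central} u1 u2 => x y /= -> <-.
move=> B; rewrite upperTrE => /imsetP[t _ ->].
by rewrite upmx_comm /parallel /= !mul0r.
Qed.

Lemma commVerticesE :
  commVertices R = [set upmx t.1 t.2 | t in [set t : R * (R * R) | t.2 != 0]].
Proof.
apply/setP => A; rewrite inE upperTrE; apply/andP/imsetP => [[]|[t]].
  by move=> + /imsetP[t _ eA]; rewrite eA upmx_center => nz; exists t; rewrite ?inE.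
by rewrite inE => nz ->; split; [rewrite upmx_center | apply: imset_f].
Qed.

Lemma card_upmx_image (P : pred (R * R)) :
  #|[set upmx t.1 t.2 | t in [set t : R * (R * R) | P t.2]]|
  = (#|R| * #|[set u | P u]|)%N.
Proof.
rewrite card_imset; last exact: upmx_inj.
by rewrite -[#|R|]cardsT -cardsX; apply: eq_card => -[d u]; rewrite !inE.
Qed.

Lemma card_commVertices : #|commVertices R| = (#|R| * #|[set u : R * R | u != 0%R]|)%N.
Proof. by rewrite commVerticesE (card_upmx_image (fun u => u != 0)). Qed.

Lemma card_commuting_upmx d u :
  #|[set B in commVertices R | upmx d u *m B == B *m upmx d u]|
  = (#|R| * #|[set v : R * R | (v != 0%R) && parallel u v]|)%N.
Proof.
rewrite -(card_upmx_image (fun v => (v != 0) && parallel u v)).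
apply: eq_card => A; rewrite inE commVerticesE.
apply/andP/imsetP => [[/imsetP[t + ->]]|[t]].
  by rewrite upmx_comm !inE => nz uv; exists t; rewrite ?inE ?nz.
rewrite inE => /andP[nz uv] ->.
by split; [apply: imset_f; rewrite inE | rewrite upmx_comm].
Qed.

Lemma commEdges_double :
  (#|commEdges R| * 2 + #|commVertices R|
   = #|R| ^ 2 * \sum_(u : R * R | u != 0%R)
                   #|[set v : R * R | (v != 0%R) && parallel u v]|)%N.
Proof.
rewrite -(@sum_card_adj _ _ (fun A B => A *m B == B *m A)); last 2 first.
- by move=> A B; rewrite eq_sym.
- by move=> A _; rewrite /= eqxx.
rewrite commVerticesE big_imset /=; last by move=> t t' _ _; apply: upmx_inj.
rewrite -commVerticesE.
have ->: (\sum_(t in [set t : R * (R * R) | t.2 != 0%R])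
           #|[set B in commVertices R | upmx t.1 t.2 *m B == B *m upmx t.1 t.2]|
         = \sum_(d : R) \sum_(u : R * R | u != 0%R)
             #|R| * #|[set v : R * R | (v != 0%R) && parallel u v]|)%N.
  by rewrite pair_big_dep; apply: eq_big => [t|t _]; rewrite ?inE // card_commuting_upmx.
by rewrite sum_nat_const -big_distrr mulnA.
Qed.
End UpperTriangular.

Lemma card_pairs_fibers (T : finType) (P : T -> T -> bool) (k : nat) :
  (forall a, #|[set b | P a b]| = k) -> #|[set v : T * T | P v.1 v.2]| = (#|T| * k)%N.
Proof.
move=> fiberP; rewrite -sum1_card.
have ->: (\sum_(v in [set v : T * T | P v.1 v.2]) 1 = \sum_(a : T) \sum_(b | P a b) 1)%N.
  by rewrite pair_big_dep; apply: eq_bigl => v; rewrite inE.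
rewrite -sum_nat_const; apply: eq_bigr => a _.
by rewrite sum1_card -(fiberP a); apply: eq_card => b; rewrite inE.
Qed.

Section Parallel.
Variable R : finComUnitRingType.

Lemma card_parallel_swap (u : R * R) :
  #|[set v | parallel u v]| = #|[set v | parallel (swap_pair u) v]|.
Proof.
rewrite -(card_preimset _ (can_inj (@swap_pairK R R))).
by apply: eq_card => v; rewrite !inE /parallel /= eq_sym.
Qed.

Lemma card_parallel_unitl (u : R * R) : u.1 \is a GRing.unit ->
  #|[set v | parallel u v]| = #|R|.
Proof.
move=> u1; rewrite -[RHS]muln1 -(card_pairs_fibers (P := fun a b => u.1 * b == u.2 * a)).
  by apply: eq_card => v; rewrite !inE.
move=> a; rewrite -(cards1 (u.2 * a / u.1)); apply: eq_card => b; rewrite !inE.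
by apply/eqP/eqP => [<-|->]; rewrite ?(mulrC u.1 b) ?mulrK // mulrC divrK.
Qed.
End Parallel.

Definition nonunits (R : finUnitRingType) : {set R} := [set z | z \notin GRing.unit].

Section SquareZeroMaximalIdeal.
Variables (R : finComUnitRingType) (pi : R).
Hypothesis mul_pi_eq0 : forall z, (pi * z == 0) = (z \notin GRing.unit).
Hypothesis nonunit_pi_mul : forall z, z \notin GRing.unit -> exists w, z = pi * w.
Hypothesis pi_nonunit : pi \notin GRing.unit.

Local Notation M := (nonunits R).
Local Notation MM := (setX (nonunits R) (nonunits R)).

Lemma card_parallel_pi_unitl (x y : R) : x \is a GRing.unit ->
  #|[set v | parallel (pi * x, pi * y) v]| = (#|R| * #|M|)%N.
Proof.
move=> ux; rewrite -(card_pairs_fibers (P := fun a b => x * b - y * a \in M)) => [|a].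
  apply: eq_card => v; rewrite !inE /parallel /= -subr_eq0 -!mulrA -mulrBr.
  by rewrite mul_pi_eq0.
have f_inj : injective (fun b => x * b - y * a) by move=> b b' /addIr /(mulrI ux).
by rewrite -(card_preimset M f_inj); apply: eq_card => b; rewrite !inE.
Qed.

Lemma card_parallel_nonunit (u : R * R) : u != 0 -> u \in MM ->
  #|[set v | parallel u v]| = (#|R| * #|M|)%N.
Proof.
case: u => x y nz; rewrite !inE /=.
case/andP=> /nonunit_pi_mul[x1 Ex] /nonunit_pi_mul[y1 Ey].
subst x y; have pi2 : pi * pi = 0 by apply/eqP; rewrite mul_pi_eq0.
have [ux1|/nonunit_pi_mul[x2 Ex1]] := boolP (x1 \is a GRing.unit).
  exact: card_parallel_pi_unitl.
have [uy1|/nonunit_pi_mul[y2 Ey1]] := boolP (y1 \is a GRing.unit).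
  by rewrite card_parallel_swap card_parallel_pi_unitl.
by move: nz; rewrite Ex1 Ey1 !mulrA pi2 !mul0r eqxx.
Qed.

Lemma card_parallel_nonzero (u : R * R) : u != 0 ->
  #|[set v : R * R | (v != 0) && parallel u v]|.+1
  = if u \in MM then (#|R| * #|M|)%N else #|R|.
Proof.
move=> nz.
have ->: #|[set v : R * R | (v != 0) && parallel u v]|.+1 = #|[set v | parallel u v]|.
  rewrite [RHS](cardsD1 (0 : R * R)) inE parallel0 add1n.
  by congr _.+1; apply: eq_card => v; rewrite !inE.
case: ifP => [|/negbT]; first exact: card_parallel_nonunit.
rewrite !inE negb_and !negbK => /orP[u1|u2]; first exact: card_parallel_unitl.
by rewrite card_parallel_swap card_parallel_unitl.
Qed.

Lemma sum_card_parallel_nonzero :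
  (\sum_(u : R * R | u != 0%R) #|[set v : R * R | (v != 0%R) && parallel u v]|
     + #|[set u : R * R | u != 0%R]|
   = #|MM :\ (0 : R * R)%R| * (#|R| * #|M|) + #|~: MM| * #|R|)%N.
Proof.
have ->: #|[set u : R * R | u != 0%R]| = (\sum_(u : R * R | u != 0%R) 1)%N.
  by rewrite sum1dep_card; apply: eq_card => u; rewrite inE.
rewrite -big_split /=.
rewrite (eq_bigr (fun u => if u \in MM then #|R| * #|M| else #|R|))%N.
  rewrite (bigID (mem MM)) /= -[(#|MM :\ _| * _)%N]sum_nat_const.
  rewrite -[(#|~: MM| * _)%N]sum_nat_const.
  congr (_ + _)%N; apply: eq_big => [u|u]; rewrite ?inE ?andbT //.
  - by case/and3P=> _ -> ->.
  - by case: eqP => [->|]; rewrite /= ?unitr0.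
  - by case/andP=> _ /negPf ->.
by move=> u nz; rewrite addn1 card_parallel_nonzero.
Qed.

Lemma card_commEdges_sqzero :
  let n : rat := (#|R|)%:R in let m : rat := (#|M|)%:R in
  (#|commEdges R|)%:R * 2
  = n ^+ 2 * ((m ^+ 2 - 1) * (n * m - 1) + (n ^+ 2 - m ^+ 2) * (n - 1))
    - n * (n ^+ 2 - 1).
Proof.
have card_nz : (#|[set u : R * R | u != 0%R]| + 1 = #|R| ^ 2)%N.
  rewrite -[(#|R| ^ 2)%N]card_prod -(cardsC [set (0 : R * R)]) cards1 addnC.
  by congr addn; apply: eq_card => u; rewrite !inE.
have card_MM0 : (#|MM :\ (0 : R * R)%R| + 1 = #|M| ^ 2)%N.
  by rewrite -mulnn -cardsX (cardsD1 (0 : R * R) MM) addnC !inE /= unitr0.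
have card_MMC : (#|M| ^ 2 + #|~: MM| = #|R| ^ 2)%N.
  by rewrite -mulnn -cardsX cardsC card_prod.
move=> n m; pose natQ (k : nat) : rat := k%:R.
have := congr1 natQ (commEdges_double R); have := congr1 natQ sum_card_parallel_nonzero.
have := congr1 natQ card_nz; have := congr1 natQ card_MM0; have := congr1 natQ card_MMC.
rewrite /natQ card_commVertices /= !natrD !natrM -/n -/m.
set E : rat := #|commEdges R|%:R; set S : rat := (\sum_(u | _) _)%:R.
set N : rat := #|[set u : R * R | u != 0%R]|%:R.
set a : rat := #|MM :\ _|%:R; set b : rat := #|~: MM|%:R.
move=> MMC MM0 nz sums edges.
have hN : N = n * n - 1 by rewrite -nz addrK.
have ha : a = m * m - 1 by rewrite -MM0 addrK.
have hb : b = n * n - m * m by rewrite -MMC addrC addKr.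
have hS : S = a * (n * m) + b * n - N by rewrite -sums addrK.
have hE : E * 2 = n * n * S - n * N by rewrite -edges addrK.
by rewrite hE hS ha hb hN; ring.
Qed.
End SquareZeroMaximalIdeal.

Lemma Zp_nat_eq0 (m n : nat) : (1 < m)%N -> ((n%:R : 'Z_m) == 0) = (m %| n)%N.
Proof. by move=> m_gt1; rewrite -val_eqE /= val_Zp_nat. Qed.

Section PrimeSquare.
Variables (p : nat) (p_pr : prime p).

Lemma prime_sqr_gt1 : (1 < p ^ 2)%N.
Proof. by rewrite -(expn0 p) ltn_exp2l ?prime_gt1. Qed.

Lemma unitZp_sqr (z : 'Z_(p ^ 2)) : (z \is a GRing.unit) = ~~ (p %| z)%N.
Proof.
rewrite -[z in LHS]natr_Zp unitZpE ?prime_sqr_gt1 //.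
by rewrite coprime_pexpl // prime_coprime.
Qed.

Lemma mul_p_eq0_Zp_sqr (z : 'Z_(p ^ 2)) : (p%:R * z == 0) = (z \notin GRing.unit).
Proof.
rewrite unitZp_sqr negbK -[z in LHS]natr_Zp -natrM Zp_nat_eq0 ?prime_sqr_gt1 //.
by rewrite -[X in (X %| _)%N]mulnn dvdn_pmul2l ?prime_gt0.
Qed.

Lemma nonunit_p_mul_Zp_sqr (z : 'Z_(p ^ 2)) :
  z \notin GRing.unit -> exists w, z = p%:R * w.
Proof.
rewrite unitZp_sqr negbK => p_dvd_z; exists (z %/ p)%N%:R.
by rewrite -natrM mulnC divnK // natr_Zp.
Qed.

Lemma p_nonunit_Zp_sqr : (p%:R : 'Z_(p ^ 2)) \notin GRing.unit.
Proof. by rewrite -mul_p_eq0_Zp_sqr -natrM Zp_nat_eq0 ?prime_sqr_gt1 ?mulnn. Qed.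

Lemma card_Zp_sqr : #|'Z_(p ^ 2)| = (p ^ 2)%N.
Proof. by rewrite card_ord Zp_cast ?prime_sqr_gt1. Qed.

Lemma card_nonunits_Zp_sqr : #|nonunits 'Z_(p ^ 2)| = p.
Proof.
have card_units : #|[set z : 'Z_(p ^ 2) | z \is a GRing.unit]| = (p.-1 * p)%N.
  rewrite -[(p.-1 * p)%N]/(p.-1 * p ^ 2.-1)%N -totient_pfactor //.
  rewrite -card_units_Zp ?expn_gt0 ?prime_gt0 // cardsT card_sub.
  by apply: eq_card => z; rewrite !inE.
have := cardsC [set z : 'Z_(p ^ 2) | z \is a GRing.unit].
rewrite card_units card_Zp_sqr (_ : ~: _ = nonunits 'Z_(p ^ 2)); last first.
  by apply/setP => z; rewrite !inE.
move=> sum_eq; apply: (@addnI (p.-1 * p)%N); apply: eq_trans sum_eq _.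
by rewrite -mulSnr prednK ?prime_gt0 // mulnn.
Qed.
End PrimeSquare.

Theorem mainTheorem9 (p : nat) (hp : prime p) :
  (#|commEdges 'Z_(p ^ 2)|)%:R
  = (1 / 2 : rat) * (p%:R ^+ 2 * (p%:R ^+ 2 - 1)
       * (p%:R ^+ 6 + p%:R ^+ 5 - p%:R ^+ 4 - 2 * p%:R ^+ 2 - 1)).
Proof.
have := card_commEdges_sqzero (mul_p_eq0_Zp_sqr hp) (nonunit_p_mul_Zp_sqr hp)
  (p_nonunit_Zp_sqr hp).
rewrite /= card_Zp_sqr // card_nonunits_Zp_sqr // natrX => edges2.
by apply: (mulIf (_ : 2 != 0)) => //; rewrite edges2; field.
Qed.
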